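(* Consider a trial-offer market with social influence in which product $i$ is permanently displayed at a position of visibility $v_i>0$, with initial appeals $A_i>0$ and qualities $q_i\in[0,1]$ ($1\le i\le n$). Write $\hat q_i=v_iq_i$ and suppose there is $1\le j<n$ and numbers $\hat q^+>\hat q^-\ge 0$ with $\hat q_1=\cdots=\hat q_j=\hat q^+$ and $\hat q_{j+1}=\cdots=\hat q_n=\hat q^-$. Then almost surely the total market share of products $j+1,\dots,n$, namely $\frac{\sum_{i=j+1}^n d_{i,t}}{\sum_{i=1}^n d_{i,t}}$, converges to $0$ as $t\to\infty$.
   Context: Dynamic market: $d_{i,t}$ is the number of purchases of product $i$ before step $t$ ($d_{i,1}=0$), $a_{i,t}=A_i+d_{i,t}$. At step $t$ one participant tries product $i$ with probability $\frac{v_i a_{i,t}}{\sum_k v_k a_{k,t}}$, then purchases it with probability $q_i$ (independently); if purchased, $d_{i,t+1}=d_{i,t}+1$, all other counts unchanged. *)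

From HB Require Import structures.
From mathcomp Require Import all_boot all_order all_algebra.
From mathcomp Require Import all_classical all_reals all_analysis.
Set Implicit Arguments. Unset Strict Implicit. Unset Printing Implicit Defensive.
Import Order.TTheory GRing.Theory Num.Theory.
Local Open Scope classical_set_scope.
Local Open Scope ring_scope.

(* State of the market: purchase counts d_i of the n products. *)
Definition mstate (n : nat) := {ffun 'I_n -> nat}.

Definition mzero (n : nat) : mstate n := [ffun _ => 0%N].

Definition incr (n : nat) (x : mstate n) (i : 'I_n) : mstate n :=
  [ffun k => if k == i then (x k).+1 else x k].

Definition try_prob {R : realType} (n : nat) (v A : 'I_n -> R) (x : mstate n)
  (i : 'I_n) : R :=
  v i * (A i + (x i)%:R) / \sum_(k < n) v k * (A k + (x k)%:R).

Definition trans {R : realType} (n : nat) (v A q : 'I_n -> R)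
  (x y : mstate n) : R :=
  \sum_(i < n) (try_prob v A x i * q i) * (y == incr x i)%:R
  + (1 - \sum_(i < n) try_prob v A x i * q i) * (y == x)%:R.

(* X is the market process: X t = (d_{i,t+1})_i in the paper's indexing,
   i.e. X 0 = 0 and X evolves as the Markov chain with kernel [trans].
   The Markov property is expressed through the finite-dimensional laws. *)
Definition market_process {R : realType} (dT : measure_display)
  (T : measurableType dT) (P : probability T R) (n : nat)
  (v A q : 'I_n -> R) (X : nat -> T -> mstate n) : Prop :=
  (forall t (x : mstate n), measurable [set w : T | X t w = x]) /\
  P [set w : T | X 0%N w = mzero n] = 1%E /\
  (forall (t : nat) (h : nat -> mstate n),
     P [set w : T | forall s, (s <= t.+1)%N -> X s w = h s] =
     (P [set w : T | forall s, (s <= t)%N -> X s w = h s]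
      * (trans v A q (h t) (h t.+1))%:E)%E).

(* total market share of products j+1..n (0-based indices >= j);
   0/0 = 0 by convention in MathComp *)
Definition low_share {R : realType} (n : nat) (j : nat) (x : mstate n) : R :=
  (\sum_(i < n | (j <= i)%N) (x i)%:R) / (\sum_(i < n) (x i)%:R).

From Pilot Require Import Defs.
From HB Require Import structures.
From mathcomp Require Import all_boot all_order all_algebra.
From mathcomp Require Import all_classical all_reals all_analysis.
From mathcomp Require Import ring lra zify.
Import Order.TTheory GRing.Theory Num.Theory numFieldNormedType.Exports.
Local Open Scope classical_set_scope.
Local Open Scope ring_scope.
Set Implicit Arguments. Unset Strict Implicit. Unset Printing Implicit Defensive.

(* Let m and k be the numbers of purchases of low products (index >= j) and of high products,
   aH the initial appeal of one high product, and Alo, Ahi the total initial appeals of the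
   two groups. The potential
     pot = prod_(i < m) (1 + aH / (Alo + i)) * prod_(i < k) (1 - rho / (Ahi + i)),
   with qm < rho * qp / aH < qp, satisfies E[pot(X_(t+1)) | X_t = x] = (1 - kappa / D x) pot x
   for some kappa > 0, where D x is the total visible appeal, which grows at most linearly in t.
   Hence E pot(X_t) <= (1 + sum_(s < t) kappa / D_s)^-1 tends to 0 (harmonic series), and the
   maximal inequality for the nonnegative supermartingale pot(X_t) gives pot(X_t) -> 0 a.s.
   The first product grows like m^aH and the second decays at most like k^(-rho), with
   rho < aH, so pot is bounded below wherever the low products hold a share at least eta. *)

Section RealBounds.
Variable R : realType.
Implicit Types x a b r h : R.

Lemma ln_le_subr1 x : 0 < x -> ln x <= x - 1.
Proof.
move=> x0; have := @le_ln1Dx R (x - 1).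
by rewrite (_ : 1 + (x - 1) = x); [apply; lra | ring].
Qed.

Lemma ln_prod (F : nat -> R) m : (forall i, 0 < F i) ->
  ln (\prod_(i < m) F i) = \sum_(i < m) ln (F i).
Proof.
move=> Fp; elim: m => [|m IH]; first by rewrite !big_ord0 ln1.
by rewrite !big_ord_recr /= lnM ?IH // posrE //; apply: prodr_gt0.
Qed.

Lemma ln1Ddiv_ge a b : 0 < a -> 0 < b -> a / (b + a) <= ln (1 + a / b).
Proof.
move=> a0 b0; have ba : 0 < b + a by lra.
have -> : 1 + a / b = (b + a) / b by field; lra.
have := ln_le_subr1 (divr_gt0 b0 ba); rewrite !ln_div ?posrE //.
have -> : b / (b + a) - 1 = - (a / (b + a)) by field; lra.
lra.
Qed.

Lemma ln1Bdiv_ge r h : 0 <= r -> r < h -> - (r / (h - r)) <= ln (1 - r / h).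
Proof.
move=> r0 rh; have h0 : 0 < h by lra.
have hr : 0 < h - r by lra.
have -> : 1 - r / h = (h - r) / h by field; lra.
have := ln_le_subr1 (divr_gt0 h0 hr); rewrite !ln_div ?posrE //.
have -> : h / (h - r) - 1 = r / (h - r) by field; lra.
lra.
Qed.

Lemma addrn_gt0 a t : 0 < a -> 0 < a + t%:R.
Proof. by move=> a0; apply: ltr_wpDr. Qed.

Lemma ln_sub_le_sum_inv a t : 0 < a ->
  ln (a + t%:R) - ln a <= \sum_(s < t) (a + s%:R)^-1.
Proof.
move=> a0; elim: t => [|t IH]; first by rewrite big_ord0 addr0 subrr.
rewrite big_ord_recr /=.
have p1 := addrn_gt0 t a0; have p2 := addrn_gt0 t.+1 a0.
have step : ln (a + t.+1%:R) - ln (a + t%:R) <= (a + t%:R)^-1.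
  rewrite -ln_div ?posrE //.
  have -> : (a + t.+1%:R) / (a + t%:R) = 1 + (a + t%:R)^-1.
    by rewrite -natr1; field; exact: lt0r_neq0.
  by apply: le_ln1Dx; apply: lt_le_trans (ltrN10 R) _; rewrite invr_ge0 ltW.
lra.
Qed.

Lemma sum_inv_le_ln_sub b k : 0 < b ->
  \sum_(i < k) (b + i%:R)^-1 <= ln (b + k%:R) - ln b + b^-1 - (b + k%:R)^-1.
Proof.
move=> b0; elim: k => [|k IH].
  by rewrite big_ord0 addr0 subrr add0r subrr.
rewrite big_ord_recr /=.
have p1 := addrn_gt0 k b0; have p2 := addrn_gt0 k.+1 b0.
have step : (b + k.+1%:R)^-1 <= ln (b + k.+1%:R) - ln (b + k%:R).
  have := ln_le_subr1 (divr_gt0 p1 p2); rewrite ln_div ?posrE //.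
  have -> : (b + k%:R) / (b + k.+1%:R) - 1 = - (b + k.+1%:R)^-1.
    by rewrite -natr1; field; rewrite natr1 lt0r_neq0.
  lra.
lra.
Qed.

Lemma subr1_div1D_le (y S : R) : 0 <= y <= 1 -> 0 <= S -> (1 - y) / (1 + S) <= (1 + (S + y))^-1.
Proof.
case/andP => y0 y1 S0; have h1 : 0 < 1 + S by lra.
have h2 : 0 < 1 + (S + y) by lra.
by rewrite ler_pdivrMr // mulrC ler_pdivlMr //; nra.
Qed.

End RealBounds.

Section MarketKernel.
Variables (R : realType) (n : nat) (v A q : 'I_n -> R).
Hypothesis v_gt0 : forall i, 0 < v i.
Hypothesis A_gt0 : forall i, 0 < A i.
Hypothesis q01 : forall i, 0 <= q i <= 1.
Implicit Types (x y : mstate n) (g : mstate n -> R).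

Definition tot_appeal x : R := \sum_(k < n) v k * (A k + (x k)%:R).

Definition buy_prob x i : R := try_prob v A x i * q i.

Definition next_mean g x : R :=
  \sum_(i < n) buy_prob x i * g (incr x i) + (1 - \sum_(i < n) buy_prob x i) * g x.

Definition succ_states x : seq (mstate n) := x :: [seq incr x i | i <- enum 'I_n].

(* The finitely many states the chain can occupy at time [t]; expectations are finite sums over it. *)
Fixpoint reach t : seq (mstate n) :=
  if t is t'.+1 then undup (flatten [seq succ_states x | x <- reach t'])
  else [:: Defs.mzero n].

Lemma reach_uniq t : uniq (reach t).
Proof. by case: t => [|t] //=; exact: undup_uniq. Qed.

Lemma reach_succ t x y : x \in reach t -> y \in succ_states x -> y \in reach t.+1.
Proof.
move=> xR yS; rewrite /= mem_undup; apply/flattenP; exists (succ_states x) => //.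
by apply/mapP; exists x.
Qed.

Lemma reach_self t x : x \in reach t -> x \in reach t.+1.
Proof. by move=> xR; apply: (reach_succ xR); rewrite inE eqxx. Qed.

Lemma reach_incr t x i : x \in reach t -> incr x i \in reach t.+1.
Proof.
move=> xR; apply: (reach_succ xR); rewrite inE; apply/orP; right.
by apply/mapP; exists i => //; rewrite mem_enum.
Qed.

Lemma reach_le t x i : x \in reach t -> (x i <= t)%N.
Proof.
elim: t x => [|t IH] x /=; first by rewrite inE => /eqP ->; rewrite ffunE.
rewrite mem_undup => /flattenP [s /mapP [y yR ->]]; rewrite inE => /orP [/eqP ->|].
  exact/leqW/IH.
move=> /mapP [k _ ->]; rewrite ffunE; case: ifP => _; first by rewrite ltnS IH.
exact/leqW/IH.
Qed.

Lemma appeal_gt0 x k : 0 < A k + (x k)%:R.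
Proof. exact: addrn_gt0. Qed.

Lemma tot_appeal_ge0 x : 0 <= tot_appeal x.
Proof. by apply: sumr_ge0 => k _; rewrite mulr_ge0 // ltW ?appeal_gt0. Qed.

Lemma tot_appeal_gt0 x (i : 'I_n) : 0 < tot_appeal x.
Proof.
rewrite /tot_appeal (bigD1 i) //=; apply: ltr_wpDr; last by rewrite mulr_gt0 ?appeal_gt0.
by apply: sumr_ge0 => k _; rewrite mulr_ge0 // ltW ?appeal_gt0.
Qed.

Lemma try_probE x i : try_prob v A x i = v i * (A i + (x i)%:R) / tot_appeal x.
Proof. by []. Qed.

Lemma buy_prob_ge0 x i : 0 <= buy_prob x i.
Proof.
have [q0 _] := andP (q01 i).
by rewrite mulr_ge0 // divr_ge0 ?tot_appeal_ge0 // mulr_ge0 // ltW ?appeal_gt0.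
Qed.

Lemma sum_buy_prob_le1 x (i0 : 'I_n) : \sum_(i < n) buy_prob x i <= 1.
Proof.
have <- : \sum_(i < n) try_prob v A x i = 1.
  by rewrite /try_prob -mulr_suml divff // lt0r_neq0 // (tot_appeal_gt0 x i0).
apply: ler_sum => i _; have [_ q1] := andP (q01 i).
by rewrite ler_piMr // divr_ge0 ?tot_appeal_ge0 // mulr_ge0 // ltW ?appeal_gt0.
Qed.

Lemma le_next_mean g g' x (i0 : 'I_n) :
  (forall y, g y <= g' y) -> next_mean g x <= next_mean g' x.
Proof.
move=> gg'; apply: lerD; first by apply: ler_sum => i _; rewrite ler_wpM2l ?buy_prob_ge0.
by rewrite ler_wpM2l // subr_ge0 (sum_buy_prob_le1 x i0).
Qed.

Lemma next_mean_cst c x : next_mean (fun=> c) x = c.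
Proof. by rewrite /next_mean -big_distrl /=; ring. Qed.

Lemma next_meanZ k g x : next_mean (fun y => k * g y) x = k * next_mean g x.
Proof.
rewrite /next_mean mulrDr big_distrr /=; congr (_ + _); last by ring.
by apply: eq_bigr => i _; ring.
Qed.

Lemma sum_seq_eq_mul (l : seq (mstate n)) z g :
  uniq l -> z \in l -> \sum_(y <- l) (y == z)%:R * g y = g z.
Proof.
move=> ul zl; rewrite (big_rem z) //= eqxx mul1r big_seq big1 ?addr0 // => y.
by rewrite mem_rem_uniq // inE => /andP [/negbTE -> _]; rewrite mul0r.
Qed.

Lemma sum_trans (l : seq (mstate n)) x g :
  uniq l -> x \in l -> (forall i, incr x i \in l) ->
  \sum_(y <- l) trans v A q x y * g y = next_mean g x.
Proof.
move=> ul xl il; rewrite /trans.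
under eq_bigr => y _ do rewrite mulrDl big_distrl /=.
rewrite big_split /= exchange_big /=; congr (_ + _).
  apply: eq_bigr => i _; rewrite -(sum_seq_eq_mul g ul (il i)) big_distrr /=.
  by apply: eq_bigr => y _; rewrite /buy_prob; ring.
rewrite -(sum_seq_eq_mul g ul xl) big_distrr /=.
by apply: eq_bigr => y _; rewrite /buy_prob; ring.
Qed.

Definition appeal_bound t : R := \sum_(k < n) v k * (A k + t%:R).

Lemma tot_appeal_le t x : x \in reach t -> tot_appeal x <= appeal_bound t.
Proof.
move=> xR; apply: ler_sum => k _; rewrite ler_wpM2l ?(ltW (v_gt0 k)) //.
by rewrite lerD2l ler_nat reach_le.
Qed.

End MarketKernel.

Section RealProbability.
Variables (R : realType) (dT : measure_display) (T : measurableType dT).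
Variable P : probability T R.
Implicit Types F G : set T.

Definition pr F : R := fine (P F).

Lemma prE F : measurable F -> P F = (pr F)%:E.
Proof. by move=> mF; rewrite /pr fineK // fin_num_measure. Qed.

Lemma pr_ge0 F : 0 <= pr F.
Proof. exact/fine_ge0/measure_ge0. Qed.

Lemma pr0 : pr set0 = 0.
Proof. by rewrite /pr measure0. Qed.

Lemma prT : pr setT = 1.
Proof. by rewrite /pr probability_setT. Qed.

Lemma prU F G : measurable F -> measurable G -> F `&` G = set0 ->
  pr (F `|` G) = pr F + pr G.
Proof. by move=> mF mG FG; rewrite /pr measureU // fineD // fin_num_measure. Qed.

Lemma le_pr F G : measurable F -> measurable G -> F `<=` G -> pr F <= pr G.
Proof.
move=> mF mG FG; rewrite /pr fine_le ?fin_num_measure //.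
by rewrite le_measure ?inE.
Qed.

Lemma prU_le F G : measurable F -> measurable G -> pr (F `|` G) <= pr F + pr G.
Proof.
move=> mF mG; rewrite -lee_fin EFinD -(prE (measurableU _ _ mF mG)) -(prE mF) -(prE mG).
exact: measureU2.
Qed.

Lemma measurable_forall (G : nat -> set T) : (forall s, measurable (G s)) ->
  measurable [set w | forall s, G s w].
Proof.
move=> mG; rewrite (_ : [set w | _] = \bigcap_s G s); first exact: bigcapT_measurable.
by apply/seteqP; split => w /= H s //; exact: H.
Qed.

Lemma measurable_exists (G : nat -> set T) : (forall s, measurable (G s)) ->
  measurable [set w | exists s, G s w].
Proof.
move=> mG; rewrite (_ : [set w | _] = \bigcup_s G s); first exact: bigcupT_measurable.
by apply/seteqP; split => w /= [s]; exists s.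
Qed.

Lemma measurable_implyl (b : bool) G : measurable G -> measurable [set w | b -> G w].
Proof.
case: b => mG; last by rewrite (_ : [set w | _] = setT) //; apply/seteqP; split.
by rewrite (_ : [set w | _] = G) //; apply/seteqP; split => w /=; [apply|].
Qed.

Lemma measurable_andl (b : bool) G : measurable G -> measurable [set w | b /\ G w].
Proof.
case: b => mG; last by rewrite (_ : [set w | _] = set0) //; apply/seteqP; split => w [].
by rewrite (_ : [set w | _] = G) //; apply/seteqP; split => w /= => [[]|].
Qed.

End RealProbability.

Section MarketProcess.
Variables (R : realType) (dT : measure_display) (T : measurableType dT).
Variables (P : probability T R) (n : nat) (v A q : 'I_n -> R).
Variable X : nat -> T -> mstate n.
Hypothesis HX : market_process P v A q X.
Implicit Types (x : mstate n) (g : mstate n -> R) (S : nat -> pred (mstate n)).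

Local Notation pr := (pr P).
Local Notation reach := (reach n).

(* [mstate n] is countable, so this is a countable union of level sets [X t = x]. *)
Lemma measurable_X t (S : pred (mstate n)) : measurable [set w | S (X t w)].
Proof.
rewrite (_ : [set w | _] = \bigcup_(k in [set k | oapp S false (pickle_inv k)])
    [set w | Some (X t w) = pickle_inv k]).
  apply: bigcup_measurable => k _; case: (pickle_inv k) => [x|].
    rewrite (_ : [set w | _] = [set w | X t w = x]); first exact: HX.1.
    by apply/seteqP; split => w /= => [[->]|->].
  by rewrite (_ : [set w | _] = set0) //; apply/seteqP; split.
apply/seteqP; split => w /=; first by exists (pickle (X t w)); rewrite /= ?pickleK_inv.
by move=> [k /=]; case: (pickle_inv k) => // x Sx [->].
Qed.

Definition guard_ev S t := [set w | forall s, (s < t)%N -> S s (X s w)].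

Definition path_ev S (h : nat -> mstate n) t m :=
  guard_ev S t `&` [set w | forall s, (t <= s <= m)%N -> X s w = h s].

Definition no_guard : nat -> pred (mstate n) := fun _ => predT.

(* E[g (X t); guard_ev S t] *)
Definition expect_on t S g :=
  \sum_(x <- reach t) pr (path_ev S (fun=> x) t t) * g x.

Definition off_reach t := [set w | X t w \notin reach t].

Lemma measurable_guard_ev S t : measurable (guard_ev S t).
Proof.
apply: (@measurable_forall _ _ (fun s => [set w | (s < t)%N -> S s (X s w)])) => s.
exact/measurable_implyl/measurable_X.
Qed.

Lemma measurable_path_ev S h t m : measurable (path_ev S h t m).
Proof.
apply: measurableI; first exact: measurable_guard_ev.
apply: (@measurable_forall _ _ (fun s => [set w | (t <= s <= m)%N -> X s w = h s])) => s.
exact/measurable_implyl/HX.1.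
Qed.

Lemma pr_mem_reach t F l : measurable F -> uniq l ->
  pr (F `&` [set w | X t w \in l]) = \sum_(x <- l) pr (F `&` [set w | X t w = x]).
Proof.
move=> mF; elim: l => [|x l IH] /=.
  move=> _; rewrite big_nil -(pr0 P); congr pr; apply/seteqP; split => w //=.
  by case=> _; rewrite in_nil.
move=> /andP [xl ul]; rewrite big_cons -IH //.
rewrite (_ : F `&` [set w | X t w \in x :: l] =
    (F `&` [set w | X t w = x]) `|` (F `&` [set w | X t w \in l])).
  apply: prU; [exact/measurableI/HX.1 | exact/measurableI/measurable_X |].
  by apply/seteqP; split => w //= [[_ ->] [_ H]]; rewrite H in xl.
apply/seteqP; split => w /=.
  by case=> Fw; rewrite inE => /orP [/eqP ->|wl]; [left|right].
by case=> [[Fw ->]|[Fw wl]]; split => //; rewrite inE ?eqxx // wl orbT.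
Qed.

Lemma pr_split_reach t F : P (off_reach t) = 0%E -> measurable F ->
  pr F = \sum_(x <- reach t) pr (F `&` [set w | X t w = x]).
Proof.
move=> Nt mF; rewrite -pr_mem_reach ?reach_uniq //.
have mI : measurable (F `&` [set w | X t w \in reach t]).
  exact/measurableI/(measurable_X t (fun x => x \in reach t)).
have mO : measurable (off_reach t) by exact: (measurable_X t (fun x => x \notin reach t)).
rewrite {1}(_ : F = (F `&` [set w | X t w \in reach t]) `|` (F `&` off_reach t)); last first.
  apply/seteqP; split => [w Fw|w [] []//].
  by case: (boolP (X t w \in reach t)); [left|right].
have mFO : measurable (F `&` off_reach t) by exact: measurableI.
rewrite prU //; last by apply/seteqP; split => w //= [[_ H]] [_ /negP].
suff -> : pr (F `&` off_reach t) = 0 by rewrite addr0.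
apply/eqP; rewrite eq_le pr_ge0 andbT.
have : pr (F `&` off_reach t) <= pr (off_reach t).
  by apply: le_pr => // w [].
by rewrite {2}/pr Nt.
Qed.

Lemma pr_cylS t (h : nat -> mstate n) :
  pr [set w | forall s, (s <= t.+1)%N -> X s w = h s] =
  pr [set w | forall s, (s <= t)%N -> X s w = h s] * trans v A q (h t) (h t.+1).
Proof.
rewrite /pr HX.2.2 fineM // fin_num_measure //.
apply: (@measurable_forall _ _ (fun s => [set w | (s <= t)%N -> X s w = h s])) => s.
exact/measurable_implyl/HX.1.
Qed.

Lemma path_ev0 S h m : path_ev S h 0 m = [set w | forall s, (s <= m)%N -> X s w = h s].
Proof. by apply/seteqP; split => w /= => [[_ H] s sm|H]; [exact: H | split=> // s /andP[_]; exact: H]. Qed.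

Lemma eq_path_ev S h h' t m : (forall s, (t <= s <= m)%N -> h s = h' s) ->
  path_ev S h t m = path_ev S h' t m.
Proof. by move=> hh'; apply/seteqP; split => w [HA HE]; split => // s sm; rewrite HE ?hh'. Qed.

Definition upd (h : nat -> mstate n) t x s := if s == t then x else h s.

Lemma path_ev_split S h t m x : (t <= m)%N ->
  path_ev S h t.+1 m `&` [set w | X t w = x] =
  if S t x then path_ev S (upd h t x) t m else set0.
Proof.
move=> tm; apply/seteqP; split => w.
  move=> [[HA HE] Hx]; case: ifP => Sx; last by have := HA t (ltnSn t); rewrite Hx Sx.
  split => [s st|s /andP [ts sm]]; first exact/HA/ltnW.
  by rewrite /upd; case: eqVneq => [->//|st]; apply: HE; rewrite sm andbT ltn_neqAle eq_sym st.
case: ifP => Sx //= [HA HE].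
have Xt : X t w = x by rewrite HE ?leqnn ?tm // /upd eqxx.
split=> //; split => [s|s /andP [ts sm]].
  by rewrite ltnS leq_eqVlt => /orP [/eqP ->|]; [rewrite Xt | exact: HA].
by rewrite HE ?sm ?(ltnW ts) // /upd gtn_eqF.
Qed.

(* Proved while the chain is only known to stay in [reach] up to [t0]: [off_reach_null]
   below establishes that hypothesis by induction on [t0]. *)
Section ReachAS.
Variable t0 : nat.
Hypothesis reach_before : forall s, (s <= t0)%N -> P (off_reach s) = 0%E.

Lemma pr_path_ev_split S h t m : (t <= t0)%N -> (t <= m)%N ->
  pr (path_ev S h t.+1 m) = \sum_(x <- reach t) (S t x)%:R * pr (path_ev S (upd h t x) t m).
Proof.
move=> tt0 tm; rewrite (pr_split_reach (reach_before tt0) (measurable_path_ev _ _ _ _)).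
apply: eq_bigr => x _; rewrite path_ev_split //.
by case: (S t x); rewrite ?mul1r ?mul0r ?(pr0 P).
Qed.

Lemma pr_path_evS t S h m : (t <= t0.+1)%N -> (t <= m)%N ->
  pr (path_ev S h t m.+1) = pr (path_ev S h t m) * trans v A q (h m) (h m.+1).
Proof.
elim: t S h m => [|t IH] S h m tt0 tm; first by rewrite !path_ev0 pr_cylS.
have tt0' : (t <= t0)%N by rewrite -ltnS.
have tm' : (t <= m)%N := ltnW tm.
rewrite (pr_path_ev_split _ _ tt0' (leqW tm')) (pr_path_ev_split _ _ tt0' tm').
rewrite big_distrl /=; apply: eq_bigr => x _.
by rewrite IH ?(ltnW tt0) // /upd !gtn_eqF ?mulrA // (ltnW tm).
Qed.

Lemma expect_onS_upto S g :
  expect_on t0.+1 S g = expect_on t0 S (fun x => (S t0 x)%:R * next_mean v A q g x).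
Proof.
rewrite /expect_on.
have E1 y : pr (path_ev S (fun=> y) t0.+1 t0.+1) =
    \sum_(x <- reach t0) (S t0 x)%:R * pr (path_ev S (fun=> x) t0 t0) * trans v A q x y.
  rewrite pr_path_ev_split //; apply: eq_bigr => x _.
  rewrite pr_path_evS // (@eq_path_ev _ _ (fun=> x)); last first.
    by move=> s /andP [h1 h2]; rewrite /upd (_ : s = t0) ?eqxx //; lia.
  by rewrite /upd eqxx gtn_eqF // mulrA.
under eq_bigr => y _ do rewrite E1 big_distrl /=.
rewrite exchange_big /= big_seq [in RHS]big_seq; apply: eq_bigr => x xR.
rewrite -(sum_trans v A q g (reach_uniq n t0.+1) (reach_self xR) (fun i => reach_incr i xR)).
by rewrite !big_distrr /=; apply: eq_bigr => y _; ring.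
Qed.

End ReachAS.

Lemma path_ev_guard S t x : path_ev S (fun=> x) t t = guard_ev S t `&` [set w | X t w = x].
Proof.
apply/seteqP; split => w [HA HE]; split => //; first by apply: HE; rewrite leqnn.
by move=> s /andP [h1 h2]; rewrite (_ : s = t) //; lia.
Qed.

Lemma expect_on_pred t S (E : pred (mstate n)) : P (off_reach t) = 0%E ->
  pr (guard_ev S t `&` [set w | E (X t w)]) = expect_on t S (fun x => (E x)%:R).
Proof.
move=> Nt; rewrite (pr_split_reach Nt); last exact/measurableI/measurable_X/measurable_guard_ev.
apply: eq_bigr => x _; rewrite path_ev_guard; case: (boolP (E x)) => Ex.
  by rewrite mulr1; congr pr; apply/seteqP; split => w /= => [[[]]|[? Xx]]; rewrite ?Xx.
rewrite mulr0 -(pr0 P); congr pr; apply/seteqP; split => w //= [[_ Ew] Xx].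
by rewrite Xx (negbTE Ex) in Ew.
Qed.

Lemma guard_ev_no_guard t : guard_ev no_guard t = setT.
Proof. by apply/seteqP; split. Qed.

Lemma off_reach_null t : P (off_reach t) = 0%E.
Proof.
have offC s : off_reach s = ~` [set w | X s w \in reach s].
  by apply/seteqP; split => w /= /negP.
have mR s : measurable [set w | X s w \in reach s].
  exact: (measurable_X s (fun x => x \in reach s)).
suff : forall s, (s <= t)%N -> P (off_reach s) = 0%E by apply; rewrite leqnn.
elim: t => [|t IH] s.
  rewrite leqn0 => /eqP ->; rewrite offC probability_setC //.
  rewrite (_ : [set w | _] = [set w | X 0 w = Defs.mzero n]) ?HX.2.1 ?subee //.
  by apply/seteqP; split => w /=; rewrite inE => /eqP.
rewrite leq_eqVlt => /orP [/eqP ->|]; last exact: IH.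
have reach1 : pr [set w | X t.+1 w \in reach t.+1] = 1.
  transitivity (expect_on t.+1 no_guard (fun=> 1)).
    rewrite -[X in pr X]setTI pr_mem_reach ?reach_uniq //; apply: eq_bigr => x _.
    by rewrite path_ev_guard guard_ev_no_guard mulr1.
  rewrite expect_onS_upto //.
  rewrite (_ : (fun x => _) = fun x => (predT x)%:R); last first.
    by apply/funext => x; rewrite next_mean_cst mulr1.
  rewrite -expect_on_pred ?IH // guard_ev_no_guard setTI -(prT P).
  by congr pr; apply/seteqP; split.
by rewrite offC probability_setC // prE // reach1 subee.
Qed.

Lemma expect_onS t S g :
  expect_on t.+1 S g = expect_on t S (fun x => (S t x)%:R * next_mean v A q g x).
Proof. by apply: expect_onS_upto => s _; exact: off_reach_null. Qed.

Lemma ler_expect_on t S g g' :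
  {in reach t, forall x, g x <= g' x} -> expect_on t S g <= expect_on t S g'.
Proof.
move=> gg'; rewrite /expect_on big_seq [leRHS]big_seq; apply: ler_sum => x xR.
by rewrite ler_wpM2l ?pr_ge0 ?gg'.
Qed.

Lemma expect_onD t S g g' :
  expect_on t S (fun x => g x + g' x) = expect_on t S g + expect_on t S g'.
Proof. by rewrite /expect_on -big_split; apply: eq_bigr => x _; rewrite mulrDr. Qed.

Lemma expect_onZ t S k g : expect_on t S (fun x => k * g x) = k * expect_on t S g.
Proof. by rewrite /expect_on big_distrr; apply: eq_bigr => x _ /=; ring. Qed.

Lemma eq_expect_on_guard t S S' g : (forall s, (s < t)%N -> S s =1 S' s) ->
  expect_on t S g = expect_on t S' g.
Proof.
move=> SS'; rewrite /expect_on; apply: eq_bigr => x _; congr (pr _ * _).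
by apply/seteqP; split => w [HA HE]; split => // s st; [rewrite -SS' | rewrite SS'] => //; exact: HA.
Qed.

End MarketProcess.

Section Supermartingale.
Variables (R : realType) (dT : measure_display) (T : measurableType dT).
Variables (P : probability T R) (n : nat) (v A q : 'I_n -> R).
Variable X : nat -> T -> mstate n.
Hypothesis v_gt0 : forall i, 0 < v i.
Hypothesis A_gt0 : forall i, 0 < A i.
Hypothesis q01 : forall i, 0 <= q i <= 1.
Hypothesis HX : market_process P v A q X.
Variable i0 : 'I_n.
Variable f : mstate n -> R.
Hypothesis f_ge0 : forall x, 0 <= f x.
Hypothesis f_super : forall x, next_mean v A q f x <= f x.

Local Notation pr := (pr P).
Local Notation expect_on := (expect_on P X).
Local Notation no_guard := (@no_guard n).

Section Level.
Variable eps : R.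
Hypothesis eps_gt0 : 0 < eps.

(* The probability, starting from [x], that [f] reaches the level [eps] within [u] steps. *)
Fixpoint hit_within u x : R :=
  if eps <= f x then 1 else if u is u'.+1 then next_mean v A q (hit_within u') x else 0.

Lemma hit_within_le u x : hit_within u x <= f x / eps.
Proof.
have above y : eps <= f y -> 1 <= f y / eps by rewrite ler_pdivlMr // mul1r.
elim: u x => [|u IH] x /=; case: ifPn => fx; rewrite ?above //.
  exact: divr_ge0 (f_ge0 x) (ltW eps_gt0).
apply: le_trans (le_next_mean v_gt0 A_gt0 q01 x i0 IH) _.
rewrite (_ : (fun y => _) = fun y => eps^-1 * f y); last by apply/funext => y; rewrite mulrC.
by rewrite next_meanZ mulrC ler_wpM2r ?f_super // invr_ge0 (ltW eps_gt0).
Qed.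

Definition hit_ev t u := [set w | exists s, (t <= s <= t + u)%N /\ eps <= f (X s w)].

Lemma measurable_hit_ev t u : measurable (hit_ev t u).
Proof.
apply: (@measurable_exists _ _ (fun s => [set w | (t <= s <= t + u)%N /\ eps <= f (X s w)])).
by move=> s; exact/measurable_andl/(measurable_X HX s (fun x => eps <= f x)).
Qed.

(* Induction on the horizon [u]: either [f] is already above [eps] at time [t], or the
   guard is strengthened by [f < eps] at time [t] and the search restarts at [t + 1]. *)
Lemma pr_hit_ev_guard u t S : pr (guard_ev X S t `&` hit_ev t u) <= expect_on t S (hit_within u).
Proof.
have mA t' S' := measurable_guard_ev HX S' t'.
have mE t' := measurable_X HX t' (fun x => eps <= f x).
elim: u t S => [|u IH] t S.
  rewrite (_ : hit_within 0 = fun x => ((eps <= f x)%R)%:R); last by apply/funext=> x /=; case: ifP.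
  rewrite -(expect_on_pred HX _ _ (off_reach_null HX t)).
  rewrite le_eqVlt; apply/orP; left; apply/eqP; congr pr; apply/seteqP.
  split => w [HA HH]; split => //; last by exists t; split => //; apply/andP; split; lia.
  by case: HH => s [/andP [h1 h2] H]; rewrite (_ : t = s) //; lia.
pose S' s := if s == t then (fun x => f x < eps) else S s.
have sub : guard_ev X S t `&` hit_ev t u.+1 `<=`
    (guard_ev X S t `&` [set w | eps <= f (X t w)]) `|` (guard_ev X S' t.+1 `&` hit_ev t.+1 u).
  move=> w [HA [s [/andP [h1 h2] Hs]]].
  case: (boolP (eps <= f (X t w))) => Ht; [by left | right]; split.
    by move=> s' s't; rewrite /S'; case: eqP => [->|E]; [rewrite ltNge | apply: HA; lia].
  exists s; split => //; have st : s != t by apply: contraNneq Ht => <-.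
  by apply/andP; split; lia.
have m1 := measurableI _ _ (mA t S) (mE t).
have m2 := measurableI _ _ (mA t.+1 S') (measurable_hit_ev t.+1 u).
have m0 := measurableI _ _ (mA t S) (measurable_hit_ev t u.+1).
apply: le_trans (le_pr P m0 (measurableU _ _ m1 m2) sub) _.
apply: le_trans (prU_le P m1 m2) _.
rewrite (expect_on_pred HX S (fun x => eps <= f x) (off_reach_null HX t)).
apply: le_trans (lerD (lexx _) (IH t.+1 S')) _.
rewrite (expect_onS HX) (@eq_expect_on_guard _ _ _ P _ X _ S' S); last first.
  by move=> s st x; rewrite /S' ltn_eqF.
rewrite -expect_onD; apply: ler_expect_on => x _ /=; rewrite /S' eqxx.
by case: ifPn => fx; rewrite ?ltNge fx /= ?mul0r ?addr0 ?add0r ?mul1r.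
Qed.

Lemma pr_hit_ev_le t u : pr (hit_ev t u) <= expect_on t no_guard f / eps.
Proof.
have := pr_hit_ev_guard u t no_guard; rewrite guard_ev_no_guard setTI => /le_trans; apply.
rewrite mulrC -expect_onZ; apply: ler_expect_on => x _.
by rewrite mulrC hit_within_le.
Qed.

End Level.

Definition often_above eps := [set w | forall t, exists s, (t <= s)%N /\ eps <= f (X s w)].

Lemma measurable_often_above eps : measurable (often_above eps).
Proof.
apply: (@measurable_forall _ _ (fun t => [set w | exists s, (t <= s)%N /\ eps <= f (X s w)])).
move=> t; apply: (@measurable_exists _ _ (fun s => [set w | (t <= s)%N /\ eps <= f (X s w)])).
by move=> s; exact/measurable_andl/(measurable_X HX s (fun x => eps <= f x)).
Qed.

Lemma pr_often_above_le eps t : 0 < eps -> pr (often_above eps) <= expect_on t no_guard f / eps.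
Proof.
move=> eps_gt0; have mH u := measurable_hit_ev eps t u.
have mU : measurable (\bigcup_u hit_ev eps t u) by exact: bigcupT_measurable.
have nd : nondecreasing_seq (hit_ev eps t).
  move=> a b ab; apply/subsetPset => w [s [/andP [h1 h2] H]].
  by exists s; split => //; apply/andP; split => //; apply: leq_trans h2 _; rewrite leq_add2l.
have Hc := @nondecreasing_cvg_mu _ _ _ P _ mH mU nd.
have : (P (\bigcup_u hit_ev eps t u) <= (expect_on t no_guard f / eps)%:E)%E.
  rewrite -(cvg_lim _ Hc) //; apply: lime_le; first exact: cvgP Hc.
  by apply: nearW => u /=; rewrite (prE P (mH u)) lee_fin pr_hit_ev_le.
rewrite (prE P mU) lee_fin; apply: le_trans; apply: (le_pr P (measurable_often_above eps) mU).
move=> w /(_ t) [s [ts Hs]]; exists (s - t)%N => //.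
by exists s; split => //; rewrite subnKC // ts leqnn.
Qed.

Lemma often_above_null eps : 0 < eps ->
  (forall d, 0 < d -> exists t, expect_on t no_guard f <= d) -> P (often_above eps) = 0%E.
Proof.
move=> eps_gt0 Ef; rewrite (prE P (measurable_often_above eps)); congr EFin.
apply/eqP; rewrite eq_le pr_ge0 andbT; apply/ler_addgt0Pr => d d_gt0.
have [t Et] := Ef _ (mulr_gt0 d_gt0 eps_gt0).
by rewrite add0r (le_trans (pr_often_above_le t eps_gt0)) // ler_pdivrMr.
Qed.

Lemma ae_cvg0 : (forall d, 0 < d -> exists t, expect_on t no_guard f <= d) ->
  {ae P, forall w, (fun t => f (X t w)) @ \oo --> 0}.
Proof.
move=> Ef; pose B := \bigcup_k often_above (k.+1%:R^-1).
have BN : P.-negligible B.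
  apply: negligible_bigcup => k; apply/negligibleP; first exact: measurable_often_above.
  by apply: often_above_null Ef; rewrite invr_gt0.
apply: negligibleS BN => w /= ncvg; apply: contrapT => nB; apply: ncvg.
apply/cvgrPdist_lt => e e_gt0.
have nBk : ~ often_above (Num.truncn e^-1).+1%:R^-1 w.
  by move=> Bk; apply: nB; exists (Num.truncn e^-1).
move/existsNP: nBk => [t /forallNP below]; exists t => // s /= ts.
rewrite sub0r normrN ger0_norm // ltNge; apply/negP => fs.
apply: (below s); split => //; apply: le_trans fs.
rewrite -[X in _ <= X]invrK lef_pV2 ?posrE ?invr_gt0 ?ltr0Sn //.
exact/ltW/truncnS_gt.
Qed.

End Supermartingale.

Section Potential.
Variables (R : realType) (n : nat) (v A q : 'I_n -> R) (j : nat) (qp qm : R).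
Hypothesis v_gt0 : forall i, 0 < v i.
Hypothesis A_gt0 : forall i, 0 < A i.
Hypothesis qm_ge0 : 0 <= qm.
Hypothesis qm_lt_qp : qm < qp.
Hypothesis vq_hi : forall i : 'I_n, (i < j)%N -> v i * q i = qp.
Hypothesis vq_lo : forall i : 'I_n, (j <= i)%N -> v i * q i = qm.
Variables (i0 i1 : 'I_n).
Hypothesis i0_hi : (i0 < j)%N.
Hypothesis i1_lo : (j <= i1)%N.
Implicit Types x : mstate n.
Local Notation share := (@low_share R n j).

Definition nlo x := (\sum_(i < n | (j <= i)%N) x i)%N.
Definition nhi x := (\sum_(i < n | ~~ (j <= i)%N) x i)%N.
Definition Alo := \sum_(i < n | (j <= i)%N) A i.
Definition Ahi := \sum_(i < n | ~~ (j <= i)%N) A i.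
Definition aH := A i0.
Definition rho := aH * (qp + qm) / (2 * qp).
Definition kappa := aH * (qp - qm) / 2.

(* A low purchase multiplies [pot] by [1 + aH / (Alo + m)], a high one by
   [1 - rho / (Ahi + k)]; they occur with probabilities proportional to
   [qm * (Alo + m)] and [qp * (Ahi + k)], and [qm < rho * qp / aH < qp] makes
   the expected factor [1 - kappa / tot_appeal x] (see [next_mean_pot]). *)
Definition Phi m := \prod_(i < m) (1 + aH / (Alo + i%:R)).
Definition Gam k := \prod_(i < k) (1 - rho / (Ahi + i%:R)).
Definition pot x := Phi (nlo x) * Gam (nhi x).

Lemma qp_gt0 : 0 < qp.
Proof. exact: le_lt_trans qm_ge0 qm_lt_qp. Qed.

Lemma Alo_gt0 : 0 < Alo.
Proof.
rewrite /Alo (bigD1 i1) //=; apply: ltr_wpDr => //.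
by apply: sumr_ge0 => i _; exact: ltW.
Qed.

Lemma aH_le_Ahi : aH <= Ahi.
Proof.
rewrite /Ahi (bigD1 i0) -?ltnNge //= lerDl.
by apply: sumr_ge0 => i _; exact: ltW.
Qed.

Lemma rho_ge0 : 0 <= rho.
Proof.
have := qp_gt0; have := A_gt0 i0; have := qm_ge0; rewrite /rho /aH => ? ? ?.
by apply: divr_ge0; nra.
Qed.

Lemma rho_lt_aH : rho < aH.
Proof.
have := qp_gt0; have := A_gt0 i0; have := qm_lt_qp => ? ? ?.
by rewrite /rho /aH ltr_pdivrMr; nra.
Qed.

Lemma kappa_gt0 : 0 < kappa.
Proof. by have := A_gt0 i0; have := qm_lt_qp => ? ?; rewrite /kappa /aH divr_gt0 //; nra. Qed.

Lemma drift_balance : qp * rho - qm * aH = kappa.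
Proof. by rewrite /rho /kappa; field; rewrite lt0r_neq0 ?qp_gt0. Qed.

Lemma Ahi_gt0 k : 0 < Ahi + k%:R.
Proof. by apply: addrn_gt0; exact: lt_le_trans (A_gt0 i0) aH_le_Ahi. Qed.

Lemma Phi_factor_gt0 i : 0 < 1 + aH / (Alo + i%:R).
Proof. by apply: ltr_wpDr ltr01; exact: divr_ge0 (ltW (A_gt0 i0)) (ltW (addrn_gt0 i Alo_gt0)). Qed.

Lemma Gam_factor_gt0 i : 0 < 1 - rho / (Ahi + i%:R).
Proof.
rewrite subr_gt0 ltr_pdivrMr ?Ahi_gt0 // mul1r.
apply: lt_le_trans rho_lt_aH (le_trans aH_le_Ahi _); rewrite lerDl //.
Qed.

Lemma Phi_gt0 m : 0 < Phi m.
Proof. by apply: prodr_gt0 => i _; exact: Phi_factor_gt0. Qed.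

Lemma Gam_gt0 k : 0 < Gam k.
Proof. by apply: prodr_gt0 => i _; exact: Gam_factor_gt0. Qed.

Lemma pot_gt0 x : 0 < pot x.
Proof. by rewrite mulr_gt0 ?Phi_gt0 ?Gam_gt0. Qed.

Lemma sum_incr x i (B : pred 'I_n) :
  (\sum_(k < n | B k) incr x i k = \sum_(k < n | B k) x k + B i)%N.
Proof.
rewrite (eq_bigr (fun k => x k + (k == i))%N); last first.
  by move=> k _; rewrite ffunE; case: eqP; rewrite ?addn1 ?addn0.
rewrite big_split /=; congr (_ + _)%N.
rewrite big_mkcond (bigD1 i) //= eqxx big1 ?addn0; first by case: (B i).
by move=> k /negbTE ->; case: (B k).
Qed.

Lemma pot_incr x i : pot (incr x i) = pot x *
  (if (j <= i)%N then 1 + aH / (Alo + (nlo x)%:R) else 1 - rho / (Ahi + (nhi x)%:R)).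
Proof.
rewrite /pot /nlo /nhi !sum_incr; case: (j <= i)%N => /=.
  by rewrite addn0 addn1 /Phi big_ord_recr /=; ring.
by rewrite addn0 addn1 /Gam big_ord_recr /=; ring.
Qed.

Lemma sum_buy_lo x :
  \sum_(i < n | (j <= i)%N) buy_prob v A q x i = qm * (Alo + (nlo x)%:R) / tot_appeal v A x.
Proof.
rewrite /buy_prob /nlo natr_sum /Alo -big_split /= mulr_sumr mulr_suml; apply: eq_bigr => i Hi.
by rewrite try_probE -(vq_lo Hi); ring.
Qed.

Lemma sum_buy_hi x :
  \sum_(i < n | ~~ (j <= i)%N) buy_prob v A q x i = qp * (Ahi + (nhi x)%:R) / tot_appeal v A x.
Proof.
rewrite /buy_prob /nhi natr_sum /Ahi -big_split /= mulr_sumr mulr_suml; apply: eq_bigr => i Hi.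
by rewrite try_probE -(@vq_hi i) ?ltnNge //; ring.
Qed.

Lemma next_mean_pot x : next_mean v A q pot x = pot x * (1 - kappa / tot_appeal v A x).
Proof.
have sx_neq0 := lt0r_neq0 (tot_appeal_gt0 v_gt0 A_gt0 x i0).
have lo_neq0 := lt0r_neq0 (addrn_gt0 (nlo x) Alo_gt0).
have hi_neq0 := lt0r_neq0 (Ahi_gt0 (nhi x)).
rewrite /next_mean; under eq_bigr => i _ do rewrite pot_incr.
rewrite (bigID (fun i : 'I_n => (j <= i)%N)) /=.
under eq_bigr => i Hi do rewrite Hi.
under [X in _ + X + _]eq_bigr => i Hi do rewrite (negbTE Hi).
rewrite [\sum_(i < n) buy_prob _ _ _ _ _](bigID (fun i : 'I_n => (j <= i)%N)) /=.
rewrite -!big_distrl /= sum_buy_lo sum_buy_hi -drift_balance.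
by field; rewrite sx_neq0 lo_neq0 hi_neq0.
Qed.

Definition al := Alo + aH.
Definition be := Ahi - rho.

Lemma al_gt0 : 0 < al.
Proof. exact: addr_gt0 Alo_gt0 (A_gt0 i0). Qed.

Lemma be_gt0 : 0 < be.
Proof. by rewrite subr_gt0; exact: lt_le_trans rho_lt_aH aH_le_Ahi. Qed.

Lemma ln_Phi_ge m : aH * (ln (al + m%:R) - ln al) <= ln (Phi m).
Proof.
rewrite /Phi (@ln_prod _ (fun i => 1 + aH / (Alo + i%:R))); last exact: Phi_factor_gt0.
apply: le_trans (ler_wpM2l (ltW (A_gt0 i0)) (ln_sub_le_sum_inv m al_gt0)) _.
rewrite big_distrr /=; apply: ler_sum => i _.
rewrite (_ : al + i%:R = (Alo + i%:R) + aH); last by rewrite /al; ring.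
exact: ln1Ddiv_ge (A_gt0 i0) (addrn_gt0 i Alo_gt0).
Qed.

Lemma ln_Gam_ge k : - (rho * (ln (be + k%:R) - ln be + be^-1)) <= ln (Gam k).
Proof.
rewrite /Gam (@ln_prod _ (fun i => 1 - rho / (Ahi + i%:R))); last exact: Gam_factor_gt0.
apply: (@le_trans _ _ (- (rho * \sum_(i < k) (be + i%:R)^-1))).
  rewrite lerN2 ler_wpM2l ?rho_ge0 //; apply: le_trans (sum_inv_le_ln_sub k be_gt0) _.
  by rewrite gerBl invr_ge0 ltW ?addrn_gt0 ?be_gt0.
rewrite big_distrr /= -sumrN; apply: ler_sum => i _.
rewrite (_ : be + i%:R = (Ahi + i%:R) - rho); last by rewrite /be; ring.
apply: ln1Bdiv_ge rho_ge0 _.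
by apply: lt_le_trans rho_lt_aH (le_trans aH_le_Ahi _); rewrite lerDl.
Qed.

Lemma low_shareE x : share x = (nlo x)%:R / ((nlo x)%:R + (nhi x)%:R).
Proof.
rewrite /low_share /nlo /nhi -!natr_sum -natrD.
by rewrite [in X in _ / X](bigID (fun i : 'I_n => (j <= i)%N)).
Qed.

Lemma low_share_ge0 x : 0 <= share x.
Proof. by rewrite low_shareE divr_ge0. Qed.

(* A share at least [eta] forces [nhi x <= nlo x / eta], so that [Gam] decays at most like
   [(al + nlo x) ^ (- rho)] while [Phi] grows like [(al + nlo x) ^ aH] with [rho < aH]. *)
Lemma pot_ge_of_share eta : 0 < eta ->
  exists2 d, 0 < d & forall x, eta <= share x -> d <= pot x.
Proof.
move=> eta_gt0; pose B := be / al + eta^-1.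
have B_gt0 : 0 < B by rewrite addr_gt0 ?invr_gt0 ?divr_gt0 ?be_gt0 ?al_gt0.
exists (expR (rho * (ln be - ln al - ln B - be^-1))); first exact: expR_gt0.
move=> x; rewrite low_shareE; set m := (nlo x)%:R; set k := (nhi x)%:R => eta_le.
have m_ge0 : 0 <= m by exact: ler0n.
have k_ge0 : 0 <= k by exact: ler0n.
have mk_gt0 : 0 < m + k.
  rewrite lt_def addr_ge0 // andbT; apply: contraTneq eta_le => ->.
  by rewrite invr0 mulr0 -ltNge.
have k_le : be + k <= B * (al + m).
  have be_le : be <= be / al * (al + m).
    rewrite mulrDr divfK ?lt0r_neq0 ?al_gt0 // lerDl.
    exact: mulr_ge0 (divr_ge0 (ltW be_gt0) (ltW al_gt0)) m_ge0.
  have k_le : k <= eta^-1 * (al + m).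
    rewrite mulrC ler_pdivlMr //; move: eta_le; rewrite ler_pdivlMr // => H.
    have := al_gt0; have := mulr_ge0 (ltW eta_gt0) m_ge0.
    nra.
  by rewrite /B mulrDl lerD.
have alm := ltr_wpDr m_ge0 al_gt0.
have bek := ltr_wpDr k_ge0 be_gt0.
have lnk : ln (be + k) <= ln B + ln (al + m).
  by rewrite -lnM ?posrE // ler_ln ?posrE ?mulr_gt0.
have lnm : ln al <= ln (al + m) by rewrite ler_ln ?posrE ?lerDl ?al_gt0.
rewrite -[pot x]lnK ?posrE ?pot_gt0 // ler_expR /pot lnM ?posrE ?Phi_gt0 ?Gam_gt0 //.
have := ln_Phi_ge (nlo x); have := ln_Gam_ge (nhi x); rewrite -/m -/k.
have : 0 <= (aH - rho) * (ln (al + m) - ln al).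
  by apply: mulr_ge0; rewrite subr_ge0 //; exact: ltW rho_lt_aH.
have : rho * ln (be + k) <= rho * (ln B + ln (al + m)) by rewrite ler_wpM2l ?rho_ge0.
nra.
Qed.

Lemma low_share_cvg0 (x : nat -> mstate n) :
  pot (x t) @[t --> \oo] --> 0 -> share (x t) @[t --> \oo] --> 0.
Proof.
move=> /cvgrPdist_lt pot0; apply/cvgrPdist_lt => eta eta_gt0.
have [d d_gt0 pot_ge] := pot_ge_of_share eta_gt0.
apply: filterS (pot0 d d_gt0) => t.
rewrite !sub0r !normrN !ger0_norm ?low_share_ge0 ?ltW ?pot_gt0 // => pot_lt.
by rewrite ltNge; apply: contraTN pot_lt => /pot_ge; rewrite -leNgt.
Qed.

End Potential.

Section PotentialDecay.
Variables (R : realType) (dT : measure_display) (T : measurableType dT).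
Variables (P : probability T R) (n : nat) (v A q : 'I_n -> R) (j : nat) (qp qm : R).
Variable X : nat -> T -> mstate n.
Hypothesis v_gt0 : forall i, 0 < v i.
Hypothesis A_gt0 : forall i, 0 < A i.
Hypothesis q01 : forall i, 0 <= q i <= 1.
Hypothesis qm_ge0 : 0 <= qm.
Hypothesis qm_lt_qp : qm < qp.
Hypothesis vq_hi : forall i : 'I_n, (i < j)%N -> v i * q i = qp.
Hypothesis vq_lo : forall i : 'I_n, (j <= i)%N -> v i * q i = qm.
Variables (i0 i1 : 'I_n).
Hypothesis i0_hi : (i0 < j)%N.
Hypothesis i1_lo : (j <= i1)%N.
Hypothesis HX : market_process P v A q X.

Local Notation pot := (pot A j qp qm i0).
Local Notation kappa := (kappa A qp qm i0).
Local Notation expect_on := (expect_on P X).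
Local Notation no_guard := (@no_guard n).

Lemma pot_ge0 x : 0 <= pot x.
Proof. exact: ltW (pot_gt0 A_gt0 qm_ge0 qm_lt_qp i0_hi i1_lo x). Qed.

Lemma kappa_le_appeal_bound t : kappa <= appeal_bound v A t.
Proof.
have kappa_le : kappa <= v i0 * (A i0 + t%:R).
  have [q0 q1] := andP (q01 i0); have := v_gt0 i0; have := A_gt0 i0 => ? ?.
  have vt : 0 <= v i0 * t%:R by rewrite mulr_ge0 // ltW.
  have Aqm : 0 <= A i0 * qm by rewrite mulr_ge0 // ltW.
  have Aqp0 : 0 <= A i0 * qp by rewrite mulr_ge0 // ltW // (le_lt_trans qm_ge0 qm_lt_qp).
  have Aqp : A i0 * qp <= A i0 * v i0.
    by rewrite -(vq_hi i0_hi) ler_wpM2l ?ler_piMr // ltW.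
  rewrite /kappa /aH; lra.
apply: le_trans kappa_le _; rewrite /appeal_bound (bigD1 i0) //= lerDl.
by apply: sumr_ge0 => k _; rewrite mulr_ge0 ?ltW ?addrn_gt0.
Qed.

Lemma appeal_bound_gt0 t : 0 < appeal_bound v A t.
Proof. exact: lt_le_trans (kappa_gt0 A_gt0 qm_lt_qp i0) (kappa_le_appeal_bound t). Qed.

Lemma next_mean_pot_le t x :
  x \in reach n t -> next_mean v A q pot x <= (1 - kappa / appeal_bound v A t) * pot x.
Proof.
move=> xR; rewrite (next_mean_pot v_gt0 A_gt0 qm_ge0 qm_lt_qp vq_hi vq_lo i0_hi i1_lo) mulrC.
rewrite ler_wpM2r ?pot_ge0 // lerD2l lerN2 ler_wpM2l ?(ltW (kappa_gt0 A_gt0 qm_lt_qp i0)) //.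
rewrite lef_pV2 ?posrE ?tot_appeal_le ?appeal_bound_gt0 //.
exact: tot_appeal_gt0.
Qed.

Lemma pot_super x : next_mean v A q pot x <= pot x.
Proof.
rewrite (next_mean_pot v_gt0 A_gt0 qm_ge0 qm_lt_qp vq_hi vq_lo i0_hi i1_lo).
rewrite ler_piMr ?pot_ge0 // gerBl divr_ge0 ?tot_appeal_ge0 //.
exact: ltW (kappa_gt0 A_gt0 qm_lt_qp i0).
Qed.

Lemma expect_pot0 : expect_on 0 no_guard pot = 1.
Proof.
rewrite /expect_on /= big_seq1 path_ev_guard guard_ev_no_guard setTI /pr HX.2.1 /= mul1r.
have nil0 (B : pred 'I_n) : (\sum_(i < n | B i) (Defs.mzero n) i = 0)%N.
  by apply: big1 => i _; rewrite ffunE.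
by rewrite /pot /nlo /nhi !nil0 /Phi /Gam !big_ord0 mulr1.
Qed.

Lemma expect_pot_le t :
  expect_on t no_guard pot <= (1 + \sum_(s < t) kappa / appeal_bound v A s)^-1.
Proof.
elim: t => [|t IH]; first by rewrite expect_pot0 big_ord0 addr0 invr1.
have kappa_ge0 := ltW (kappa_gt0 A_gt0 qm_lt_qp i0).
have y_ge0 := divr_ge0 kappa_ge0 (ltW (appeal_bound_gt0 t)).
have y_le1 : kappa / appeal_bound v A t <= 1.
  by rewrite ler_pdivrMr ?appeal_bound_gt0 ?mul1r ?kappa_le_appeal_bound.
have S_ge0 : 0 <= \sum_(s < t) kappa / appeal_bound v A s.
  by apply: sumr_ge0 => s _; exact: divr_ge0 kappa_ge0 (ltW (appeal_bound_gt0 s)).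
rewrite (expect_onS HX).
apply: (@le_trans _ _ (expect_on t no_guard (fun x => (1 - kappa / appeal_bound v A t) * pot x))).
  by apply: ler_expect_on => x xR; rewrite mul1r next_mean_pot_le.
rewrite expect_onZ big_ord_recr /=; apply: le_trans (ler_wpM2l _ IH) _; first by rewrite subr_ge0.
by rewrite subr1_div1D_le ?y_ge0.
Qed.

Lemma expect_pot_small d : 0 < d -> exists t, expect_on t no_guard pot <= d.
Proof.
move=> d_gt0.
pose bs := \sum_(k < n) v k.
pose al := (\sum_(k < n) v k * A k) / bs.
have bs_gt0 : 0 < bs.
  by rewrite /bs (bigD1 i0) //= ltr_wpDr ?sumr_ge0 // => k _; rewrite ltW.
have al_gt0 : 0 < al.
  rewrite divr_gt0 // (bigD1 i0) //= ltr_wpDr ?mulr_gt0 ?sumr_ge0 // => k _.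
  by rewrite mulr_ge0 ?ltW.
have kappa_gt0 := kappa_gt0 A_gt0 qm_lt_qp i0.
have boundE s : kappa / appeal_bound v A s = kappa / bs * (al + s%:R)^-1.
  rewrite (_ : appeal_bound v A s = bs * (al + s%:R)) ?invfM ?mulrA //.
  rewrite /appeal_bound /al; under eq_bigr => k _ do rewrite mulrDr.
  by rewrite big_split /= -big_distrl /= -/bs; field; exact: lt0r_neq0.
pose K := ln al + bs / (kappa * d).
exists (Num.truncn (expR K)).+1; set t := _.+1.
apply: le_trans (expect_pot_le t) _.
have K_le : K <= ln (al + t%:R).
  rewrite -[K]expRK ler_ln ?posrE ?expR_gt0 ?addrn_gt0 //.
  by apply/ltW/(lt_le_trans (truncnS_gt _)); rewrite lerDr ltW.
have sum_ge : d^-1 <= \sum_(s < t) kappa / appeal_bound v A s.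
  under eq_bigr => s _ do rewrite boundE.
  have c_ge0 := divr_ge0 (ltW kappa_gt0) (ltW bs_gt0).
  rewrite -mulr_sumr; apply: le_trans (ler_wpM2l c_ge0 (ln_sub_le_sum_inv t al_gt0)).
  rewrite (_ : d^-1 = kappa / bs * (bs / (kappa * d))); last by field; rewrite !lt0r_neq0.
  by rewrite ler_wpM2l //; rewrite /K in K_le; lra.
have dV_gt0 : 0 < d^-1 by rewrite invr_gt0.
rewrite -[leRHS]invrK lef_pV2 ?posrE //; lra.
Qed.

End PotentialDecay.

Theorem mainTheorem6 (R : realType) (dT : measure_display) (T : measurableType dT)
  (P : probability T R) (n : nat) (v A q : 'I_n -> R) (j : nat) (qp qm : R)
  (X : nat -> T -> mstate n) :
  (forall i, 0 < v i) -> (forall i, 0 < A i) -> (forall i, 0 <= q i <= 1) ->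
  (1 <= j)%N -> (j < n)%N -> 0 <= qm -> qm < qp ->
  (forall i : 'I_n, (i < j)%N -> v i * q i = qp) ->
  (forall i : 'I_n, (j <= i)%N -> v i * q i = qm) ->
  market_process P v A q X ->
  {ae P, forall w, (fun t => low_share j (X t w)) @ \oo --> (0 : R)}.
Proof.
move=> v_gt0 A_gt0 q01 j_ge1 j_lt_n qm_ge0 qm_lt_qp vq_hi vq_lo HX.
pose i0 : 'I_n := Ordinal (leq_ltn_trans (leq0n j) j_lt_n).
pose i1 : 'I_n := Ordinal j_lt_n.
have i0_hi : (i0 < j)%N by [].
have i1_lo : (j <= i1)%N by [].
have pot_ge0 := pot_ge0 A_gt0 qm_ge0 qm_lt_qp i0_hi i1_lo.
have pot_super := pot_super v_gt0 A_gt0 qm_ge0 qm_lt_qp vq_hi vq_lo i0_hi i1_lo.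
have pot_small := expect_pot_small v_gt0 A_gt0 q01 qm_ge0 qm_lt_qp vq_hi vq_lo i0_hi i1_lo HX.
apply: filterS (ae_cvg0 v_gt0 A_gt0 q01 HX i0 pot_ge0 pot_super pot_small) => w.
exact: (@low_share_cvg0 _ _ _ _ _ _ A_gt0 qm_ge0 qm_lt_qp _ _ i0_hi i1_lo (X^~ w)).
Qed.
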